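(* For a ring $R$ the following are equivalent: (1) every right $R$-module of finite composition length is a homomorphic image of an injective right $R$-module; (2) $R_R\in \underline{\mathfrak{In}}^{-1}(A)$ for every right $R$-module $A$ of finite length; (3) every projective right $R$-module $P$ satisfies $P\in \underline{\mathfrak{In}}^{-1}(A)$ for every right $R$-module $A$ of finite length.
   Context: For right $R$-modules $X,Y$, $X\in \underline{\mathfrak{In}}^{-1}(Y)$ means: for every module $C$ containing $X$ as a submodule, every homomorphism $X\to Y$ extends to a homomorphism $C\to Y$. *)

From HB Require Import structures.
From mathcomp Require Import all_boot all_algebra.
Set Implicit Arguments. Unset Strict Implicit. Unset Printing Implicit Defensive.
Import GRing.Theory.
Local Open Scope ring_scope.

(* Right R-modules are modelled as left modules over the converse ring R^c:
   a *: x (a : R^c) stands for the right action x . a. *)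
Notation rmodType R := (lmodType (R^c)%type).

(* R_R: the ring R regarded as a right module over itself. *)
Notation RR R := ((R^c)^o)%type.

Section Defs.
Variable R : nzRingType.

Definition is_submod (M : rmodType R) (S : M -> Prop) :=
  S 0 /\ forall (a : R^c) (x y : M), S x -> S y -> S (a *: x + y).

Definition incl (M : Type) (S T : M -> Prop) := forall x, S x -> T x.

Definition strict_incl (M : Type) (S T : M -> Prop) :=
  incl S T /\ exists x, T x /\ ~ S x.

Definition finite_length (M : rmodType R) :=
  exists (n : nat) (S : nat -> M -> Prop),
    [/\ (forall i, is_submod (S i)),
        (forall x, S 0%N x <-> x = 0),
        (forall x, S n x) &
        (forall i, (i < n)%N ->
           strict_incl (S i) (S i.+1) /\
           forall T, is_submod T -> incl (S i) T -> incl T (S i.+1) ->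
             incl T (S i) \/ incl (S i.+1) T)].

Definition InInv (X Y : rmodType R) :=
  forall (C : rmodType R) (i : {linear X -> C}), injective i ->
  forall f : {linear X -> Y}, exists g : {linear C -> Y}, forall x, g (i x) = f x.

Definition injective_module (E : rmodType R) :=
  forall (X C : rmodType R) (i : {linear X -> C}), injective i ->
  forall f : {linear X -> E}, exists g : {linear C -> E}, forall x, g (i x) = f x.

Definition projective_module (P : rmodType R) :=
  forall (B C : rmodType R) (p : {linear B -> C}), (forall c, exists b, p b = c) ->
  forall f : {linear P -> C}, exists g : {linear P -> B}, forall x, p (g x) = f x.

End Defs.

(* Fix an injective module E0 containing R_R.  For (2) => (1):
   given x in M, (2) extends r |-> x r along R_R <= E0, so x lies in the
   image of some map E0 -> M; walking up a composition series
   0 = S_0 < ... < S_n = M, the maximality of S_k in S_(k+1) shows that if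
   the image of E covers S_k then the image of E * E0 covers S_(k+1).  For
   (1) => (3): lift a map P -> A through an injective cover E ->> A using
   projectivity, extend the lift along P <= C using injectivity, and project
   back.  (3) => (2) because R_R is projective.
   For E0 we take Hom_Z(R, (Q/Z)^R): it is injective since (Q/Z)^R is
   divisible (Baer's criterion over Z, via Zorn's lemma), and R_R embeds in
   it because characters into Q/Z separate the points of R. *)

From HB Require Import structures.
From mathcomp Require Import all_boot all_algebra.
From mathcomp Require Import boolp classical_sets lra.
From mathcomp Require functions.
Set Implicit Arguments. Unset Strict Implicit. Unset Printing Implicit Defensive.
Import GRing.Theory Num.Theory.
Local Open Scope ring_scope.

Definition divisible (D : zmodType) :=
  forall (y : D) (n : nat), (0 < n)%N -> exists d : D, d *+ n = y.

Section RatModInt.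

Definition frac (q : rat) : rat := q - (Num.floor q)%:~R.

Lemma floor_frac q : Num.floor (frac q) == 0.
Proof. by rewrite /frac -intrN floorDrz ?intr_int // intrKfloor subrr. Qed.

Lemma fracDz q n : frac (q + n%:~R) = frac q.
Proof. rewrite /frac floorDrz ?intr_int // intrKfloor intrD; lra. Qed.

Definition QZ := {q : rat | Num.floor q == 0}.
HB.instance Definition _ := Choice.copy QZ {q : rat | Num.floor q == 0}.

Definition qz (q : rat) : QZ := exist _ (frac q) (floor_frac q).

Lemma qzDz q n : qz (q + n%:~R) = qz q.
Proof. by apply: val_inj; rewrite /= fracDz. Qed.

Lemma valK_qz (x : QZ) : qz (val x) = x.
Proof. by apply: val_inj; rewrite /= /frac; case: x => q /= /eqP ->; lra. Qed.

Lemma QZ_ind (P : QZ -> Prop) : (forall q, P (qz q)) -> forall x, P x.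
Proof. by move=> Pqz x; rewrite -(valK_qz x). Qed.

Lemma qz_valD a b : qz (val (qz a) + b) = qz (a + b).
Proof. by rewrite /= /frac addrAC -intrN qzDz. Qed.

Let qadd (x y : QZ) := qz (val x + val y).
Let qopp (x : QZ) := qz (- val x).

Let qadd_qz a b : qadd (qz a) (qz b) = qz (a + b).
Proof. by rewrite /qadd qz_valD addrC qz_valD addrC. Qed.

Let qopp_qz a : qopp (qz a) = qz (- a).
Proof. by rewrite /qopp /= /frac opprB addrC qzDz. Qed.

Let qaddA : associative qadd.
Proof. by elim/QZ_ind=> a; elim/QZ_ind=> b; elim/QZ_ind=> c; rewrite !qadd_qz addrA. Qed.
Let qaddC : commutative qadd.
Proof. by elim/QZ_ind=> a; elim/QZ_ind=> b; rewrite !qadd_qz addrC. Qed.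
Let qadd0 : left_id (qz 0) qadd.
Proof. by elim/QZ_ind=> a; rewrite qadd_qz add0r. Qed.
Let qaddN : left_inverse (qz 0) qopp qadd.
Proof. by elim/QZ_ind=> a; rewrite qopp_qz qadd_qz addNr. Qed.

HB.instance Definition _ := GRing.isZmodule.Build QZ qaddA qaddC qadd0 qaddN.

Lemma qzD a b : qz (a + b) = qz a + qz b.
Proof. by rewrite -qadd_qz. Qed.

Lemma qzMn a n : qz (a *+ n) = qz a *+ n.
Proof. by elim: n => [|n IH]; rewrite ?mulr0n // !mulrS qzD IH. Qed.

Lemma qz_int n : qz n%:~R = 0.
Proof. by rewrite -(add0r n%:~R) qzDz. Qed.

Lemma QZ_divisible : divisible QZ.
Proof.
move=> y n n0; elim/QZ_ind: y => a; exists (qz (a / n%:R)).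
by rewrite -qzMn -(mulr_natr (a / n%:R)) mulfVK // pnatr_eq0 -lt0n.
Qed.

Lemma qz_invMn n : (0 < n)%N -> qz n%:R^-1 *+ n = 0.
Proof.
move=> n0; rewrite -qzMn -(mulr_natr n%:R^-1) mulVf ?pnatr_eq0 -?lt0n //.
by rewrite -(qz_int 1).
Qed.

Lemma qz_inv_neq0 n : (1 < n)%N -> qz n%:R^-1 != 0.
Proof.
move=> n1; apply/eqP => /(congr1 val) /=; rewrite /frac.
have -> : Num.floor (n%:R^-1 : rat) = 0.
  apply/eqP; rewrite floor_eq /= add0r invr_ge0 ler0n /=.
  by rewrite invf_lt1 ?ltr0n ?(ltn_trans _ n1) // ltr1n.
by rewrite subr0 => /eqP; rewrite invr_eq0 pnatr_eq0; case: n n1.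
Qed.

End RatModInt.

Section PartialAdditive.
Variables (C D : zmodType).
Implicit Types (B : C -> Prop) (h : C -> D).

Definition is_subgroup B := B 0 /\ forall x y, B x -> B y -> B (x - y).

Definition additive_on B h := forall x y, B x -> B y -> h (x - y) = h x - h y.

Definition extends B h B' h' := forall x, B x -> B' x /\ h' x = h x.

Section SubgroupTheory.
Variables (B : C -> Prop) (h : C -> D).
Hypotheses (sgB : is_subgroup B) (hB : additive_on B h).

Lemma subgroup0 : B 0. Proof. exact: sgB.1. Qed.

Lemma subgroupB x y : B x -> B y -> B (x - y). Proof. exact: sgB.2. Qed.

Lemma subgroupN x : B x -> B (- x).
Proof. by move=> Bx; rewrite -sub0r; apply: subgroupB => //; apply: subgroup0. Qed.

Lemma subgroupD x y : B x -> B y -> B (x + y).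
Proof. by move=> Bx By; rewrite -(opprK y); apply: subgroupB => //; apply: subgroupN. Qed.

Lemma subgroupMn x n : B x -> B (x *+ n).
Proof.
move=> Bx; elim: n => [|n IH]; first by rewrite mulr0n; apply: subgroup0.
by rewrite mulrS; apply: subgroupD.
Qed.

Lemma subgroupMz x k : B x -> B (x *~ k).
Proof.
move=> Bx; case: k => n; rewrite ?NegzE ?mulrNz; last apply: subgroupN.
  all: exact: subgroupMn.
Qed.

Lemma additive_on0 : h 0 = 0.
Proof. by have := hB subgroup0 subgroup0; rewrite subrr => ->; rewrite subrr. Qed.

Lemma additive_onN x : B x -> h (- x) = - h x.
Proof. by move=> Bx; rewrite -sub0r hB ?additive_on0 ?sub0r //; apply: subgroup0. Qed.

Lemma additive_onD x y : B x -> B y -> h (x + y) = h x + h y.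
Proof.
move=> Bx By; have BNy := subgroupN By.
by rewrite -{1}(opprK y) hB // additive_onN // opprK.
Qed.

Lemma additive_onMn x n : B x -> h (x *+ n) = h x *+ n.
Proof.
move=> Bx; elim: n => [|n IH]; first by rewrite !mulr0n additive_on0.
by rewrite !mulrS additive_onD ?IH //; apply: subgroupMn.
Qed.

Lemma additive_onMz x k : B x -> h (x *~ k) = h x *~ k.
Proof.
move=> Bx; case: k => n; first exact: additive_onMn.
by rewrite NegzE !mulrNz additive_onN ?additive_onMn //; apply: subgroupMn.
Qed.

End SubgroupTheory.

Lemma zmod_morphismD (g : C -> D) : zmod_morphism g -> {morph g : x y / x + y}.
Proof. by move=> gB x y; apply: (@additive_onD (fun=> True)) => //; split. Qed.

Lemma subgroup_multiples B c : is_subgroup B ->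
  (forall k, B (c *~ k) -> k = 0) \/
  exists2 n, (0 < n)%N & B (c *+ n) /\ forall k, B (c *~ k) -> (n%:Z %| k)%Z.
Proof.
move=> sgB; have [[n0 n0_gt0 Bn0]|noB] := pselect (exists2 n, (0 < n)%N & B (c *+ n)).
  right; have exP : exists n, (0 < n)%N && `[< B (c *+ n) >].
    by exists n0; rewrite n0_gt0; apply/asboolP.
  have [n /andP[n_gt0 /asboolP Bn] n_min] := find_ex_minn exP.
  exists n => //; split => // k Bk; apply/dvdz_mod0P.
  have r_ge0 : 0 <= (k %% n)%Z by rewrite modz_ge0 // eqz_nat -lt0n.
  have : (k %% n < n)%Z by rewrite ltz_pmod // ltz_nat.
  have : B (c *~ (k %% n)%Z).
    have -> : (k %% n)%Z = k - (k %/ n)%Z * n.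
      by rewrite {2}(divz_eq k n) addrAC subrr add0r.
    rewrite mulrzBr -mulrzA_C -pmulrn.
    by apply: subgroupB => //; apply: subgroupMz.
  case: (k %% n)%Z r_ge0 => // -[|m] // _ Bm; rewrite ltz_nat -pmulrn in Bm *.
  move=> m_lt_n; have := n_min m.+1; rewrite asboolT // => /(_ isT).
  by rewrite leqNgt m_lt_n.
left=> -[[|n]|n] // Bn; case: noB; exists n.+1 => //.
by rewrite NegzE mulrNz -pmulrn in Bn; rewrite -[_ *+ _]opprK; apply: subgroupN.
Qed.

Lemma extend_at B h c d : is_subgroup B -> additive_on B h ->
    (forall k, B (c *~ k) -> h (c *~ k) = d *~ k) ->
  exists B' h', [/\ is_subgroup B', additive_on B' h', extends B h B' h', B' c & h' c = d].
Proof.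
move=> sgB hB hc.
pose B' x := exists b k, B b /\ x = b + c *~ k.
pose h' x := if pselect (B' x) is left Bx then
  let: exist b Hb := cid Bx in let: exist k _ := cid Hb in h b + d *~ k else 0.
have h'E b k : B b -> h' (b + c *~ k) = h b + d *~ k.
  move=> Bb; rewrite /h'; case: pselect => [Bx|[]]; last by exists b, k.
  case: (cid Bx) => b' Hb; case: (cid Hb) => k' [Bb' e].
  have ck : c *~ (k' - k) = b - b'.
    by rewrite mulrzBr; apply/eqP; rewrite subr_eq addrAC e [b' + _]addrC addrK.
  have := hc (k' - k); rewrite ck hB // mulrzBr => /(_ (subgroupB sgB Bb Bb')) hbb'.
  by rewrite -[h b](subrK (h b')) hbb' addrAC subrK addrC.
have addB' b1 b2 k1 k2 : b1 + c *~ k1 - (b2 + c *~ k2) = (b1 - b2) + c *~ (k1 - k2).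
  by rewrite mulrzBr opprD !addrA; congr (_ + _); rewrite addrAC.
exists B', h'; split.
- split; first by exists 0, 0; rewrite mulr0z addr0; split => //; apply: subgroup0.
  move=> _ _ [b1 [k1 [B1 ->]]] [b2 [k2 [B2 ->]]].
  by exists (b1 - b2), (k1 - k2); rewrite addB'; split => //; apply: subgroupB.
- move=> _ _ [b1 [k1 [B1 ->]]] [b2 [k2 [B2 ->]]].
  rewrite addB' !h'E //; last exact: subgroupB.
  by rewrite hB // mulrzBr opprD !addrA; congr (_ + _); rewrite addrAC.
- move=> x Bx; split; first by exists x, 0; rewrite mulr0z addr0.
  by have := h'E x 0 Bx; rewrite mulr0z !addr0.
- by exists 0, 1; rewrite add0r mulr1z; split => //; apply: subgroup0.
- by have := h'E 0 1 (subgroup0 sgB); rewrite add0r mulr1z (additive_on0 sgB hB) add0r.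
Qed.

Lemma compatible_value B h c : divisible D -> is_subgroup B -> additive_on B h ->
  exists d, forall k, B (c *~ k) -> h (c *~ k) = d *~ k.
Proof.
move=> Ddiv sgB hB; case: (subgroup_multiples c sgB) => [trivial|[n n_gt0 [Bn dvdn]]].
  by exists 0 => k /trivial ->; rewrite !mulr0z (additive_on0 sgB hB).
have [d dn] := Ddiv (h (c *+ n)) n n_gt0.
exists d => k /dvdn /dvdzP[q ->].
by rewrite -mulrzA_C -pmulrn (additive_onMz sgB hB) // -dn pmulrn mulrzA_C.
Qed.

Section Zorn.
Variables (B0 : C -> Prop) (h0 : C -> D).
Hypotheses (sgB0 : is_subgroup B0) (hB0 : additive_on B0 h0).

Let extension := {p : (C -> Prop) * (C -> D) |
  [/\ is_subgroup p.1, additive_on p.1 p.2 & extends B0 h0 p.1 p.2]}.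

Let ext_le (p q : extension) :=
  `[< extends (sval p).1 (sval p).2 (sval q).1 (sval q).2 >].

Let ext0 : extension := exist _ (B0, h0) (And3 sgB0 hB0 (fun x B0x => conj B0x erefl)).

Let chain_upper_bound (A : set extension) :
  total_on A ext_le -> exists t, forall s, A s -> ext_le s t.
Proof.
move=> Atot; have [[p0 Ap0]|noA] := pselect (exists p, A p); last first.
  by exists ext0 => s As; case: noA; exists s.
pose Bs x := exists p, A p /\ (sval p).1 x.
pose hs x := if pselect (Bs x) is left Bx then (sval (sval (cid Bx))).2 x else 0.
have hsE p x : A p -> (sval p).1 x -> hs x = (sval p).2 x.
  move=> Ap px; rewrite /hs; case: pselect => [Bx|[]]; last by exists p.
  case: (cid Bx) => q [Aq qx] /=.
  by case: (Atot _ _ Ap Aq) => /asboolP le; [case: (le _ px) | case: (le _ qx)].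
have common p q x y : A p -> A q -> (sval p).1 x -> (sval q).1 y ->
    exists s, [/\ A s, (sval s).1 x & (sval s).1 y].
  move=> Ap Aq px qy; case: (Atot _ _ Ap Aq) => /asboolP le.
    by exists q; split => //; case: (le _ px).
  by exists p; split => //; case: (le _ qy).
have sgBs : is_subgroup Bs.
  split; first by exists p0; split => //; case: (svalP p0) => -[].
  move=> x y [p [Ap px]] [q [Aq qy]].
  have [s [As sx sy]] := common _ _ _ _ Ap Aq px qy.
  by exists s; split => //; case: (svalP s) => sgs _ _; apply: subgroupB.
have hsB : additive_on Bs hs.
  move=> x y [p [Ap px]] [q [Aq qy]].
  have [s [As sx sy]] := common _ _ _ _ Ap Aq px qy.
  case: (svalP s) => sgs hs_add _.
  by rewrite !(hsE s) // ?hs_add //; apply: subgroupB.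
have extBs : extends B0 h0 Bs hs.
  move=> x B0x; case: (svalP p0) => _ _ /(_ x B0x) [p0x <-].
  by split; [exists p0 | rewrite (hsE p0)].
exists (exist _ (Bs, hs) (And3 sgBs hsB extBs)) => s As; apply/asboolP => x sx /=.
by split; [exists s | rewrite (hsE s)].
Qed.

Hypothesis Ddiv : divisible D.

Lemma divisible_extend :
  exists g : C -> D, zmod_morphism g /\ forall x, B0 x -> g x = h0 x.
Proof.
have [m m_max] : exists m, premaximal ext_le m.
  apply: (ZL_preorder ext0) => [t|p q s /asboolP pq /asboolP qs|].
  - by apply/asboolP.
  - by apply/asboolP => x /pq [/qs [? ->] ->].
  - exact: chain_upper_bound.
case: (svalP m) => sgm hm extm.
suff m_total : forall x, (sval m).1 x.
  exists (sval m).2; split; first by move=> x y; apply: hm.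
  by move=> x /extm [].
move=> c; apply: contrapT => mc.
have [d hd] := compatible_value c Ddiv sgm hm.
have [B' [h' [sgB' hB' ext' B'c _]]] := extend_at sgm hm hd.
have ext0' : extends B0 h0 B' h'.
  by move=> x /extm [/ext' [? ->]].
have /m_max /asboolP : ext_le m (exist _ (B', h') (And3 sgB' hB' ext0')) by apply/asboolP.
by move=> /(_ c B'c) [].
Qed.

End Zorn.

Lemma divisible_injective (A : zmodType) (u : A -> C) (f : A -> D) :
  divisible D -> zmod_morphism u -> injective u -> zmod_morphism f ->
  exists g : C -> D, zmod_morphism g /\ forall x, g (u x) = f x.
Proof.
move=> Ddiv uB u_inj fB.
pose B c := exists x, u x = c.
pose h c := if pselect (B c) is left Bc then f (sval (cid Bc)) else 0.
have hu x : h (u x) = f x.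
  rewrite /h; case: pselect => [Bc|[]]; last by exists x.
  by case: cid => y /= /u_inj ->.
have sgB : is_subgroup B.
  split; first by exists 0; rewrite -(subrr 0) uB subrr.
  by move=> _ _ [x <-] [y <-]; exists (x - y); rewrite uB.
have hB : additive_on B h by move=> _ _ [x <-] [y <-]; rewrite -uB !hu fB.
have [g [gB gh]] := divisible_extend sgB hB Ddiv.
by exists g; split => // x; rewrite gh ?hu //; exists x.
Qed.

End PartialAdditive.

Lemma QZ_character (C : zmodType) (c : C) : c != 0 ->
  exists chi : C -> QZ, zmod_morphism chi /\ chi c != 0.
Proof.
move=> c_neq0; pose B0 x := x = 0 :> C.
have sgB0 : is_subgroup B0 by split => // x y -> ->; rewrite subrr.
have hB0 : additive_on B0 (fun=> 0 : QZ) by move=> *; rewrite subrr.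
(* d is 1/n when c has order n, and 1/2 when c has infinite order. *)
have [d [d_neq0 hd]] : exists d : QZ, d != 0 /\ forall k, B0 (c *~ k) -> 0 = d *~ k.
  case: (subgroup_multiples c sgB0) => [trivial|[n n_gt0 [cn0 dvdn]]].
    by exists (qz 2%:R^-1); split => [|k /trivial ->]; rewrite ?qz_inv_neq0 ?mulr0z.
  have n_gt1 : (1 < n)%N.
    case: n n_gt0 cn0 {dvdn} => [|[|]] //; rewrite /B0 mulr1n => _ c0.
    by rewrite c0 eqxx in c_neq0.
  exists (qz n%:R^-1); split => [|k /dvdn /dvdzP[q ->]]; first exact: qz_inv_neq0.
  by rewrite -mulrzA_C -pmulrn qz_invMn // mul0rz.
have [B' [h' [sgB' hB' _ B'c h'c]]] := extend_at sgB0 hB0 hd.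
have [chi [chiB chi_ext]] := divisible_extend sgB' hB' QZ_divisible.
by exists chi; split => //; rewrite chi_ext // h'c.
Qed.

Definition mkLinear (S : pzRingType) (U V : lmodType S) (f : U -> V) (fL : linear f) :
  {linear U -> V} := HB.pack f (GRing.isLinear.Build S U V *:%R f fL).

Section HomZ.
Variables (R : nzRingType) (D : zmodType).

Record homZ := HomZ { homz_fun :> R -> D; homz_morphism : zmod_morphism homz_fun }.

HB.instance Definition _ := gen_eqMixin homZ.
HB.instance Definition _ := gen_choiceMixin homZ.
HB.instance Definition _ (f : homZ) :=
  GRing.isZmodMorphism.Build R D (homz_fun f) (homz_morphism f).

Lemma homZ_ext (f g : homZ) : f =1 g -> f = g.
Proof.
case: f g => f fB [g gB] /= /funext fg; subst g.
by congr HomZ; apply: Prop_irrelevance.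
Qed.

Program Definition homz0 := @HomZ (fun=> 0) _.
Next Obligation. by move=> x y; rewrite subrr. Qed.

Program Definition homz_add (f g : homZ) := @HomZ (fun s => f s + g s) _.
Next Obligation. by move=> x y; rewrite !raddfB opprD addrACA. Qed.

Program Definition homz_opp (f : homZ) := @HomZ (fun s => - f s) _.
Next Obligation. by move=> x y; rewrite raddfB opprD. Qed.

Program Definition homz_scale (a : R^c) (f : homZ) := @HomZ (fun s => f ((a : R) * s)) _.
Next Obligation. by move=> x y; rewrite mulrBr raddfB. Qed.

Let homz_addA : associative homz_add.
Proof. by move=> f g h; apply: homZ_ext => s /=; rewrite addrA. Qed.
Let homz_addC : commutative homz_add.
Proof. by move=> f g; apply: homZ_ext => s /=; rewrite addrC. Qed.
Let homz_add0 : left_id homz0 homz_add.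
Proof. by move=> f; apply: homZ_ext => s /=; rewrite add0r. Qed.
Let homz_addN : left_inverse homz0 homz_opp homz_add.
Proof. by move=> f; apply: homZ_ext => s /=; rewrite addNr. Qed.

HB.instance Definition _ :=
  GRing.isZmodule.Build homZ homz_addA homz_addC homz_add0 homz_addN.

Let homz_scaleA a b f : homz_scale a (homz_scale b f) = homz_scale (a * b) f.
Proof. by apply: homZ_ext => s /=; rewrite mulrA. Qed.
Let homz_scale1 : left_id 1 homz_scale.
Proof. by move=> f; apply: homZ_ext => s /=; rewrite mul1r. Qed.
Let homz_scaleDr : right_distributive homz_scale +%R.
Proof. by move=> a f g; apply: homZ_ext. Qed.
Let homz_scaleDl f : {morph homz_scale^~ f : a b / a + b}.
Proof. by move=> a b; apply: homZ_ext => s /=; rewrite mulrDl raddfD. Qed.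

HB.instance Definition _ := GRing.Zmodule_isLmodule.Build R^c homZ
  homz_scaleA homz_scale1 homz_scaleDr homz_scaleDl.

Lemma homZ_injective : divisible D -> injective_module homZ.
Proof.
move=> Ddiv X C i i_inj f.
have f1B : zmod_morphism (fun x => f x 1) by move=> x y; rewrite raddfB.
have [g [gB gi]] := divisible_injective Ddiv (raddfB i) i_inj f1B.
have gD := zmod_morphismD gB.
have GB c : zmod_morphism (fun s : R => g ((s : R^c) *: c)).
  by move=> x y; rewrite scalerBl gB.
pose G c := HomZ (GB c).
have GL : linear G.
  by move=> a c c'; apply: homZ_ext => s /=; rewrite scalerDr scalerA gD.
exists (mkLinear GL) => x; apply: homZ_ext => s /=.
by rewrite -linearZ gi linearZ /= mulr1.
Qed.

Lemma RR_homZ_embedding (phi : R -> D) : zmod_morphism phi -> injective phi ->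
  exists j : {linear RR R -> homZ}, injective j.
Proof.
move=> phiB phi_inj.
have jB (r : R) : zmod_morphism (fun s => phi (r * s)) by move=> x y; rewrite mulrBr phiB.
pose j (r : RR R) := HomZ (jB r).
have jL : linear j.
  move=> a r r'; apply: homZ_ext => s /=.
  by rewrite mulrDl (zmod_morphismD phiB) mulrA.
exists (mkLinear jL) => r r' /(congr1 (fun f : homZ => f 1)) /=.
by rewrite !mulr1 => /phi_inj.
Qed.

End HomZ.

(* [functions] provides the pointwise Z-module structure on [T -> D]; it is
   imported only inside this section because it also exports an [incl]. *)
Section FunctionSpaceCogenerator.
Import functions.

Lemma divisible_fun (T : Type) (D : zmodType) : divisible D -> divisible (T -> D).
Proof.
move=> Ddiv f n n0; have dP t := Ddiv (f t) n n0.
by exists (fun t => sval (cid (dP t))); rewrite natmulfctE; apply/funext => t; case: cid.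
Qed.

Lemma QZ_embedding (C : zmodType) :
  exists phi : C -> (C -> QZ), zmod_morphism phi /\ injective phi.
Proof.
have chiP (t : C) : exists chi : C -> QZ, zmod_morphism chi /\ (t != 0 -> chi t != 0).
  have [->|t_neq0] := eqVneq t 0; last first.
    by have [chi [chiB chit]] := QZ_character t_neq0; exists chi.
  by exists (fun=> 0); split => // *; rewrite subrr.
pose phi x t := sval (cid (chiP t)) x.
have phiB : zmod_morphism phi.
  move=> x y; apply/funext => t; rewrite opprfctE addrfctE /phi /=.
  by have [chiB _] := svalP (cid (chiP t)); apply: chiB.
exists phi; split => // x y /(congr1 (fun f => f (x - y))); rewrite /phi => e.
have [chiB chi_sep] := svalP (cid (chiP (x - y))).
by apply/eqP; rewrite -subr_eq0; apply/negPn/negP => /chi_sep; rewrite chiB e subrr eqxx.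
Qed.

Lemma RR_injective_hull (R : nzRingType) :
  exists E : rmodType R, injective_module E /\ exists j : {linear RR R -> E}, injective j.
Proof.
have [phi [phiB phi_inj]] := QZ_embedding R.
exists (homZ R (R -> QZ)); split; first exact/homZ_injective/divisible_fun/QZ_divisible.
exact: RR_homZ_embedding phiB phi_inj.
Qed.

End FunctionSpaceCogenerator.

Section RightModules.
Variable R : nzRingType.
Implicit Types M P A E : rmodType R.

Lemma scale_linear M (x : M) : linear (fun r : RR R => (r : R^c) *: x).
Proof. by move=> a r r'; rewrite scalerDl -scalerA. Qed.

Lemma RR_projective : projective_module (RR R).
Proof.
move=> B C p p_surj f; have [b pb] := p_surj (f 1).
exists (mkLinear (scale_linear b)) => r /=.
by rewrite linearZ pb -linearZ /= [_ *: _]mulr1.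
Qed.

Lemma injective_module_prod A E :
  injective_module A -> injective_module E -> injective_module (A * E)%type.
Proof.
move=> Ainj Einj X C i i_inj f.
have f1L : linear (fun x => (f x).1) by move=> a x y; rewrite linearP.
have f2L : linear (fun x => (f x).2) by move=> a x y; rewrite linearP.
have [g1 g1i] := Ainj _ _ i i_inj (mkLinear f1L).
have [g2 g2i] := Einj _ _ i i_inj (mkLinear f2L).
have gL : linear (fun c => (g1 c, g2 c)) by move=> a c c'; rewrite !linearP.
by exists (mkLinear gL) => x /=; rewrite g1i g2i /=; case: (f x).
Qed.

Lemma InInv_of_injective_cover P A E (p : {linear E -> A}) :
  projective_module P -> injective_module E -> (forall a, exists e, p e = a) ->
  InInv P A.
Proof.
move=> Pproj Einj p_surj C i i_inj f.
have [g pg] := Pproj _ _ p p_surj f.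
have [h hi] := Einj _ _ i i_inj g.
have phL : linear (fun c => p (h c)) by move=> a c c'; rewrite !linearP.
by exists (mkLinear phL) => x /=; rewrite hi pg.
Qed.

Lemma sum_linear M E F (p : {linear E -> M}) (q : {linear F -> M}) :
  linear (fun e : E * F => p e.1 + q e.2).
Proof. by move=> a [e1 f1] [e2 f2] /=; rewrite !linearP scalerDr addrACA. Qed.

Lemma cover_composition_step M (S S' : M -> Prop) E F
    (p : {linear E -> M}) (q : {linear F -> M}) (x : M) :
  is_submod S' -> incl S S' ->
  (forall T, is_submod T -> incl S T -> incl T S' -> incl T S \/ incl S' T) ->
  S' x -> ~ S x -> (forall y, S y -> exists e, p e = y) -> (exists f, q f = x) ->
  forall y, S' y -> exists e : E * F, p e.1 + q e.2 = y.
Proof.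
move=> [S'0 S'lin] SS' S_max S'x Sx p_cov [f qf].
pose T y := S' y /\ exists e : E * F, p e.1 + q e.2 = y.
have Tsub : is_submod T.
  split; first by split => //; exists 0; rewrite /= !linear0 addr0.
  move=> a y y' [Sy [e ey]] [Sy' [e' ey']]; split; first exact: S'lin.
  by exists (a *: e + e'); rewrite -ey -ey' /= !linearP scalerDr addrACA.
have ST : incl S T.
  move=> y Sy; split; first exact: SS'.
  by have [e <-] := p_cov y Sy; exists (e, 0); rewrite /= linear0 addr0.
case: (S_max T Tsub ST (fun y Ty => Ty.1)) => [TS|S'T y /S'T[] //].
by case: Sx; apply: TS; split => //; exists (0, f); rewrite /= linear0 add0r.
Qed.

Lemma injective_cover_of_InInv_RR M : finite_length M -> InInv (RR R) M ->
  exists E, injective_module E /\ exists p : {linear E -> M}, forall m, exists e, p e = m.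
Proof.
move=> [n [S [S_sub S0 Sn S_step]]] RR_ext.
have [E0 [E0inj [j j_inj]]] := RR_injective_hull R.
have hit (x : M) : exists q : {linear E0 -> M}, q (j 1) = x.
  have [q qj] := RR_ext _ j j_inj (mkLinear (scale_linear x)).
  by exists q; rewrite qj /= scale1r.
suff cover k : (k <= n)%N ->
    exists E, injective_module E /\
      exists p : {linear E -> M}, forall y, S k y -> exists e, p e = y.
  have [E [Einj [p p_cov]]] := cover n (leqnn n).
  by exists E; split => //; exists p => m; apply: p_cov (Sn m).
elim: k => [_|k IH k_lt_n].
  have [q _] := hit 0.
  by exists E0; split => //; exists q => y /S0 ->; exists 0; rewrite linear0.
have [E [Einj [p p_cov]]] := IH (ltnW k_lt_n).
have [[SS' [x [S'x Sx]]] S_max] := S_step k k_lt_n.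
have [q qx] := hit x.
exists (E * E0)%type; split; first exact: injective_module_prod.
exists (mkLinear (sum_linear p q)).
exact: cover_composition_step (S_sub k.+1) SS' S_max S'x Sx p_cov (ex_intro _ _ qx).
Qed.

End RightModules.

Theorem mainTheorem11 (R : nzRingType) :
  [<-> (forall M : rmodType R, finite_length M ->
          exists E : rmodType R, injective_module E /\
            exists p : {linear E -> M}, forall m, exists e, p e = m);
       (forall A : rmodType R, finite_length A -> InInv (RR R) A);
       (forall P : rmodType R, projective_module P ->
          forall A : rmodType R, finite_length A -> InInv P A)].
Proof.
tfae=> [cover1 A Afl | InInv_RR P Pproj A Afl | InInv_proj M Mfl].
- have [E [Einj [p p_surj]]] := cover1 A Afl.
  exact: InInv_of_injective_cover (@RR_projective R) Einj p_surj.
- have [E [Einj [p p_surj]]] := injective_cover_of_InInv_RR Afl (InInv_RR A Afl).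
  exact: InInv_of_injective_cover Pproj Einj p_surj.
- exact: injective_cover_of_InInv_RR Mfl (InInv_proj _ (@RR_projective R) M Mfl).
Qed.
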